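(* Let $h:\mathbb{R}^n\to\mathbb{R}\cup\{+\infty\}$ be a proper closed convex function and $F:\mathbb{R}^n\to\mathbb{R}$ a convex function, $f:=F+h$, and suppose $f$ attains its minimum value $f^*$ at some $x^*$. Let $q\in[0,2)$, $L>0$, $\delta\ge0$, and suppose that for every $y\in\mathrm{dom}\, f$ one can compute $g(y)$ with $$0\le F(x)-\big(F(y)+\langle g(y),x-y\rangle\big)\le \frac{L}{2}\|x-y\|^2+\delta\|x-y\|^q\quad\text{for all }x\in\mathrm{dom}\, f.$$ Let $\rho>0$, $\alpha=\frac{1}{L+q\rho}$, $x_0\in\mathrm{dom}\, h$, and $x_{k+1}=\mathrm{prox}_{\alpha h}(x_k-\alpha g(x_k))$ for $k\ge0$, where $\mathrm{prox}_{\gamma h}(z):=\arg\min_{y\in\mathrm{dom}\, h}\{h(y)+\tfrac{1}{2\gamma}\|z-y\|^2\}$. Define $\hat x_k=\frac{1}{k+1}\sum_{i=0}^{k}x_{i+1}$ and $R=\|x_0-x^*\|$. Then for all $k\ge1$, $$f(\hat x_k)-f^*\le \frac{(L+q\rho)R^2}{2k}+\frac{(2-q)\,\delta^{\frac{2}{2-q}}}{2\rho^{\frac{q}{2-q}}}.$$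
   Context: $\|\cdot\|$ is the Euclidean norm. The two-sided inequality on $g(y)$ is the paper's ''inexact first-order $(\delta,L)$-oracle of degree $q$'' for convex $F$. *)

From HB Require Import structures.
From mathcomp Require Import all_boot all_order all_algebra.
From mathcomp Require Import all_classical all_reals all_analysis.
Set Implicit Arguments. Unset Strict Implicit. Unset Printing Implicit Defensive.
Import Order.TTheory GRing.Theory Num.Theory.
Local Open Scope ring_scope.

Section Defs.
Context {R : realType} {n : nat}.
Notation vec := 'rV[R]_n.

Definition dotv (u v : vec) : R := \sum_(i < n) u ord0 i * v ord0 i.
Definition enorm (u : vec) : R := Num.sqrt (dotv u u).

Definition edom (h : vec -> \bar R) : set vec := [set x | (h x < +oo)%E].

Definition proper_fun (h : vec -> \bar R) : Prop :=
  (forall x, h x != -oo%E) /\ (exists x, (h x < +oo)%E).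

(* closed = lower semicontinuous (w.r.t. the Euclidean norm) *)
Definition lsc_fun (h : vec -> \bar R) : Prop :=
  forall (x : vec) (a : R), (a%:E < h x)%E ->
    exists2 e : R, 0 < e & forall y, enorm (y - x) < e -> (a%:E < h y)%E.

Definition econvex_fun (h : vec -> \bar R) : Prop :=
  forall (x y : vec) (t : R), 0 <= t <= 1 ->
    (h (t *: x + (1 - t) *: y)%R <= t%:E * h x + (1 - t)%:E * h y)%E.

Definition convex_fun (F : vec -> R) : Prop :=
  forall (x y : vec) (t : R), 0 <= t <= 1 ->
    F (t *: x + (1 - t) *: y) <= t * F x + (1 - t) * F y.

Definition is_prox (gamma : R) (h : vec -> \bar R) (z p : vec) : Prop :=
  edom h p /\
  forall y, edom h y ->
    (h p + ((2 * gamma)^-1 * enorm (z - p)%R ^+ 2)%R%:E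
       <= h y + ((2 * gamma)^-1 * enorm (z - y)%R ^+ 2)%R%:E)%E.

End Defs.

From HB Require Import structures.
From mathcomp Require Import all_boot all_order all_algebra.
From mathcomp Require Import all_classical all_reals all_analysis.
From mathcomp.algebra_tactics Require Import ring lra.
(* With M := L + q rho, one proximal step satisfies, for every z in dom h,
     f(x_{k+1}) - f(z) <= M/2 (|x_k - z|^2 - |x_{k+1} - z|^2) + c:
   the optimality condition of the prox bounds h, the two sides of the oracle
   bound F, and Young's inequality absorbs the inexactness term delta r^q into
   (q rho / 2) r^2 + c, where c is the second term of the bound.  Summing over
   the steps telescopes, and Jensen's inequality for the convex f = F + h
   passes from the average of the values to the value at the average.  The
   minimality of x* is only needed to place it in dom h. *)

Set Implicit Arguments.
Unset Strict Implicit.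
Unset Printing Implicit Defensive.

Import Order.TTheory GRing.Theory Num.Theory.
Local Open Scope ring_scope.

Definition inexact_cost {R : realType} (q rho delta : R) : R :=
  (2 - q) * delta `^ (2 / (2 - q)) / (2 * rho `^ (q / (2 - q))).

Lemma young_sq_powR (R : realType) (q rho delta r : R) :
  0 <= q < 2 -> 0 < rho -> 0 <= delta -> 0 <= r ->
  delta * r `^ q <= q * rho / 2 * r ^+ 2 + inexact_cost q rho delta.
Proof.
move=> /andP[q_ge0 q_lt2] rho_gt0 delta_ge0 r_ge0.
have [->|q_neq0] := eqVneq q 0.
  rewrite /inexact_cost powRr0 subr0 !mul0r powRr0 divff ?powRr1 //.
  by rewrite mulr1 add0r mulr1 mulrC mulKf.
have q_gt0 : 0 < q by rewrite lt_neqAle eq_sym q_neq0.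
have rhoN_q : rho `^ (- (q / 2)) * rho `^ (q / 2) = 1.
  by rewrite powRN mulVf // gt_eqF // powR_gt0.
(* Young with conjugate exponents 2/(2-q) and 2/q, applied to
   (delta rho^(-q/2)) * (rho^(q/2) r^q) *)
have := @conjugate_powR R (delta * rho `^ (- (q / 2))) (rho `^ (q / 2) * r `^ q)
  (2 / (2 - q)) (2 / q).
rewrite -mulrA [_ `^ (- _) * _]mulrA rhoN_q mul1r => /(_ _ _ _ _ _)/le_trans; apply.
- by rewrite mulr_ge0 ?powR_ge0.
- by rewrite mulr_ge0 ?powR_ge0.
- by rewrite divr_gt0 // subr_gt0.
- by rewrite divr_gt0.
- by field; lra.
rewrite powRM ?powR_ge0 // powRM ?powR_ge0 // -!powRrM.
have -> : - (q / 2) * (2 / (2 - q)) = - (q / (2 - q)) by field; lra.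
have -> : q / 2 * (2 / q) = 1 by field.
have -> : q * (2 / q) = 2%:R by field.
rewrite powRr1 ?(ltW rho_gt0) // powR_mulrn // powRN addrC le_eqVlt.
apply/orP; left; apply/eqP; rewrite /inexact_cost; field.
by rewrite gt_eqF ?powR_gt0 // subr_eq0 gt_eqF.
Qed.

Lemma sumr_le_telescope (R : realDomainType) (a b : nat -> R) (c : R) (m : nat) :
  (forall i, a i <= b i - b i.+1 + c) ->
  \sum_(i < m) a i <= b 0%N - b m + m%:R * c.
Proof.
move=> ab; elim: m => [|m IH]; first by rewrite big_ord0 subrr mul0r addr0.
by rewrite big_ord_recr /= -natr1; have := ab m; lra.
Qed.

Section InnerProduct.
Context {R : realType} {n : nat}.
Local Notation vec := 'rV[R]_n.
Implicit Types u v w : vec.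

Lemma dotvC u v : dotv u v = dotv v u.
Proof. by apply: eq_bigr => i _; rewrite mulrC. Qed.

Lemma dotvDl u v w : dotv (u + v) w = dotv u w + dotv v w.
Proof. by rewrite /dotv -big_split; apply: eq_bigr => i _; rewrite mxE mulrDl. Qed.

Lemma dotvZl a u w : dotv (a *: u) w = a * dotv u w.
Proof. by rewrite /dotv mulr_sumr; apply: eq_bigr => i _; rewrite mxE mulrA. Qed.

Lemma dotvNl u w : dotv (- u) w = - dotv u w.
Proof. by rewrite -scaleN1r dotvZl mulN1r. Qed.

Lemma dotvDr u v w : dotv w (u + v) = dotv w u + dotv w v.
Proof. by rewrite dotvC dotvDl !(dotvC w). Qed.

Lemma dotvZr a u w : dotv w (a *: u) = a * dotv w u.
Proof. by rewrite dotvC dotvZl dotvC. Qed.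

Lemma dotvNr u w : dotv w (- u) = - dotv w u.
Proof. by rewrite dotvC dotvNl dotvC. Qed.

Lemma dotvv_ge0 u : 0 <= dotv u u.
Proof. by apply: sumr_ge0 => i _; exact: sqr_ge0. Qed.

Lemma enorm_ge0 u : 0 <= enorm u.
Proof. exact: sqrtr_ge0. Qed.

Lemma enorm_sqr u : enorm u ^+ 2 = dotv u u.
Proof. by rewrite sqr_sqrtr // dotvv_ge0. Qed.

Lemma dotvBB u v : dotv (u - v) (u - v) = dotv u u - 2 * dotv u v + dotv v v.
Proof. by rewrite dotvDl !dotvDr !dotvNl !dotvNr (dotvC v u); ring. Qed.

Lemma enorm_three_point u v w :
  enorm (v - u) ^+ 2 - 2 * dotv (u - v) (w - v) =
  enorm (u - w) ^+ 2 - enorm (v - w) ^+ 2.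
Proof.
rewrite !enorm_sqr !dotvBB dotvDl !dotvDr !dotvNl !dotvNr.
rewrite ?(dotvC v u) ?(dotvC w u) ?(dotvC w v); ring.
Qed.

End InnerProduct.

Section ConvexOn.
Context {R : realType} {n : nat}.
Local Notation vec := 'rV[R]_n.

Definition convex_on (D : set vec) (phi : vec -> R) : Prop :=
  forall u v t, D u -> D v -> 0 <= t <= 1 ->
    D (t *: u + (1 - t) *: v) /\
    phi (t *: u + (1 - t) *: v) <= t * phi u + (1 - t) * phi v.

Definition is_min_on (D : set vec) (phi : vec -> R) (p : vec) : Prop :=
  D p /\ forall y, D y -> phi p <= phi y.

Lemma convex_on_addl (D : set vec) (F phi : vec -> R) :
  convex_fun F -> convex_on D phi -> convex_on D (fun z => F z + phi z).
Proof.
move=> F_conv phi_conv u v t Du Dv t01.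
have [Dc phi_c] := phi_conv u v t Du Dv t01.
by split => //; have := F_conv u v t t01; lra.
Qed.

Lemma convex_on_average (D : set vec) (phi : vec -> R) (p : nat -> vec) (m : nat) :
  convex_on D phi -> (forall i, D (p i)) ->
  D ((m.+1%:R)^-1 *: \sum_(i < m.+1) p i) /\
  phi ((m.+1%:R)^-1 *: \sum_(i < m.+1) p i) <= (m.+1%:R)^-1 * \sum_(i < m.+1) phi (p i).
Proof.
move=> phi_conv Dp; elim: m => [|m [D_avg phi_avg]].
  by rewrite !big_ord1 invr1 scale1r mul1r.
have N_gt0 : 0 < m.+1%:R :> R by rewrite ltr0Sn.
rewrite -[m.+2%:R]natr1 [\sum_(i < m.+2) p i]big_ord_recr.
rewrite [\sum_(i < m.+2) phi (p i)]big_ord_recr /=.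
set N : R := m.+1%:R in N_gt0 D_avg phi_avg *.
set t := (N + 1)^-1.
have N1_neq0 : N + 1 != 0 by rewrite gt_eqF //; lra.
have t01 : 0 <= t <= 1 by rewrite invr_ge0 invf_le1; lra.
have one_t : 1 - t = t * N by rewrite /t; field.
have -> : t *: (\sum_(i < m.+1) p i + p m.+1) =
    t *: p m.+1 + (1 - t) *: (N^-1 *: \sum_(i < m.+1) p i).
  by rewrite one_t scalerA mulfK ?gt_eqF // scalerDr addrC.
have [D_c phi_c] := phi_conv _ _ _ (Dp m.+1) D_avg t01.
split => //; apply: (le_trans phi_c).
rewrite mulrDr [X in _ <= X]addrC lerD2l one_t -mulrA ler_wpM2l ?invr_ge0 //; first lra.
by rewrite mulrC -ler_pdivlMr // mulrC.
Qed.

Lemma prox_variational_ineq (D : set vec) (phi : vec -> R) (M : R) (w p z : vec) :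
  0 < M -> convex_on D phi ->
  is_min_on D (fun y => phi y + M / 2 * enorm (w - y) ^+ 2) p -> D z ->
  M * dotv (w - p) (z - p) <= phi z - phi p.
Proof.
move=> M_gt0 phi_conv [Dp p_min] Dz.
set B := dotv (w - p) (z - p); set K := M / 2 * dotv (z - p) (z - p).
have K_ge0 : 0 <= K by rewrite mulr_ge0 ?dotvv_ge0 //; lra.
(* test minimality of p against t z + (1 - t) p, then let t go to 0 *)
have segment t : 0 < t <= 1 -> M * B <= phi z - phi p + t * K.
  move=> /andP[t_gt0 t_le1].
  have [D_t phi_t] := phi_conv z p t Dz Dp (introT andP (conj (ltW t_gt0) t_le1)).
  have := p_min _ D_t; rewrite !enorm_sqr.
  have -> : w - (t *: z + (1 - t) *: p) = (w - p) - t *: (z - p).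
    by apply/rowP => i; rewrite !mxE; ring.
  rewrite [X in _ <= _ + _ * X]dotvBB dotvZl !dotvZr -/B => p_le.
  have : t * (M * B) <= t * (phi z - phi p + t * K) by rewrite /K; nra.
  by rewrite ler_pM2l.
apply/ler_addgt0Pr => e e_gt0.
have eK_gt0 : 0 < e + K by lra.
have := segment (e / (e + K)).
rewrite divr_gt0 ?ler_pdivrMr // mul1r lerDl K_ge0 => /(_ isT).
have : e / (e + K) * K <= e by rewrite mulrAC ler_pdivrMr //; nra.
lra.
Qed.
End ConvexOn.

Section ProximalGradient.
Context {R : realType} {n : nat}.
Local Notation vec := 'rV[R]_n.
Variables (D : set vec) (F phi : vec -> R) (g : vec -> vec) (x : nat -> vec).
Variables (xs : vec) (q L delta rho : R).
Local Notation M := (L + q * rho).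
Local Notation f z := (F z + phi z).
Local Notation c := (inexact_cost q rho delta).

Hypotheses (F_conv : convex_fun F) (phi_conv : convex_on D phi).
Hypotheses (q_range : 0 <= q < 2) (L_gt0 : 0 < L).
Hypotheses (delta_ge0 : 0 <= delta) (rho_gt0 : 0 < rho).
Hypothesis oracle : forall y, D y -> forall z, D z ->
  0 <= F z - (F y + dotv (g y) (z - y)) <=
  L / 2 * enorm (z - y) ^+ 2 + delta * enorm (z - y) `^ q.
Hypothesis x0_in : D (x 0%N).
Hypothesis x_prox : forall k,
  is_min_on D (fun y => phi y + M / 2 * enorm (x k - M^-1 *: g (x k) - y) ^+ 2) (x k.+1).
Hypothesis xs_in : D xs.

Lemma inv_step_gt0 : 0 < M.
Proof. exact: ltr_pwDl L_gt0 (mulr_ge0 (proj1 (andP q_range)) (ltW rho_gt0)). Qed.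

Lemma iterate_in_dom i : D (x i).
Proof. by case: i => [|i] //; case: (x_prox i). Qed.

Lemma prox_grad_step i :
  f (x i.+1) - f xs <=
  M / 2 * (enorm (x i - xs) ^+ 2 - enorm (x i.+1 - xs) ^+ 2) + c.
Proof.
have := prox_variational_ineq inv_step_gt0 phi_conv (x_prox i) xs_in.
have /andP[F_lower _] := oracle (iterate_in_dom i) xs_in.
have /andP[_ F_upper] := oracle (iterate_in_dom i) (iterate_in_dom i.+1).
have := young_sq_powR q_range rho_gt0 delta_ge0 (enorm_ge0 (x i.+1 - x i)).
move: F_lower F_upper; set y := x i; set p := x i.+1 => F_lower F_upper young.
have -> : y - M^-1 *: g y - p = (y - p) - M^-1 *: g y.
  by apply/rowP => j; rewrite !mxE; ring.
rewrite dotvDl dotvNl dotvZl mulrBr mulrA mulfV ?gt_eqF ?inv_step_gt0 // mul1r.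
have split_g : dotv (g y) (xs - y) = dotv (g y) (xs - p) + dotv (g y) (p - y).
  by rewrite -dotvDr addrA subrK.
rewrite -enorm_three_point; lra.
Qed.

Lemma prox_grad_sum m :
  \sum_(i < m) (f (x i.+1) - f xs) <= M / 2 * enorm (x 0%N - xs) ^+ 2 + m%:R * c.
Proof.
pose b i := M / 2 * enorm (x i - xs) ^+ 2.
have b_ge0 : 0 <= b m by rewrite mulr_ge0 ?sqr_ge0 // divr_ge0 // ltW // inv_step_gt0.
suff : \sum_(i < m) (f (x i.+1) - f xs) <= b 0%N - b m + m%:R * c.
  by rewrite /b /= in b_ge0 *; lra.
apply: (@sumr_le_telescope _ (fun i => f (x i.+1) - f xs) b) => i.
by rewrite /b -mulrBr prox_grad_step.
Qed.

Lemma prox_grad_average k :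
  let xhat := (k.+1%:R)^-1 *: \sum_(i < k.+1) x i.+1 in
  D xhat /\ f xhat - f xs <= M * enorm (x 0%N - xs) ^+ 2 / (2 * k.+1%:R) + c.
Proof.
have [D_xhat f_xhat] := convex_on_average k (convex_on_addl F_conv phi_conv)
  (fun i => iterate_in_dom i.+1).
split => //; set N : R := k.+1%:R in f_xhat *.
have N_neq0 : N != 0 by rewrite pnatr_eq0.
have sum_le := prox_grad_sum k.+1.
rewrite sumrB sumr_const card_ord -[f xs *+ _]mulr_natl -/N in sum_le.
set S := \sum_(i < k.+1) f (x i.+1) in f_xhat sum_le.
set e := enorm (x 0%N - xs) ^+ 2 in sum_le *.
apply: le_trans (lerB f_xhat (lexx (f xs))) _.
have -> : N^-1 * S - f xs = N^-1 * (S - N * f xs) by field.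
have -> : M * e / (2 * N) + c = N^-1 * (M / 2 * e + N * c) by field.
by rewrite ler_pM2l ?invr_gt0 ?ltr0Sn.
Qed.

End ProximalGradient.

Section ExtendedValued.
Context {R : realType} {n : nat}.
Variable h : 'rV[R]_n -> \bar R.

Lemma edom_le (a b : R) u z :
  (a%:E + h u <= b%:E + h z)%E -> edom h z -> edom h u.
Proof.
move=> le_uz z_dom; rewrite /edom /=; apply: contraTT z_dom.
rewrite !ltey !negbK => /eqP hu_inf; rewrite hu_inf addey // leye_eq in le_uz.
by move: le_uz; case: (h z).
Qed.

Hypothesis h_proper : proper_fun h.

Lemma edom_fineK u : edom h u -> h u = (fine (h u))%:E.
Proof.
move=> u_dom; rewrite fineK // fin_numE (lt_eqF u_dom) andbT.
exact: h_proper.1.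
Qed.

Lemma convex_on_edom : econvex_fun h -> convex_on (edom h) (fun u => fine (h u)).
Proof.
move=> h_conv u v t u_dom v_dom t01; have := h_conv u v t t01.
rewrite (edom_fineK u_dom) (edom_fineK v_dom) -!EFinM -EFinD => h_le.
have c_dom : edom h (t *: u + (1 - t) *: v) by exact: le_lt_trans h_le (ltry _).
by split=> //; rewrite (edom_fineK c_dom) lee_fin in h_le.
Qed.

Lemma is_prox_min_on gamma z p : is_prox gamma h z p ->
  is_min_on (edom h) (fun y => fine (h y) + gamma^-1 / 2 * enorm (z - y) ^+ 2) p.
Proof.
move=> [p_dom p_min]; split=> // y y_dom; have p_le := p_min y y_dom.
rewrite (edom_fineK p_dom) (edom_fineK y_dom) -!EFinD lee_fin in p_le.
by rewrite -[_ / 2]mulrC -invfM.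
Qed.

End ExtendedValued.

Theorem corollary2 (R : realType) (n : nat)
  (h : 'rV[R]_n -> \bar R) (F : 'rV[R]_n -> R) (xs : 'rV[R]_n)
  (q L delta rho : R) (g : 'rV[R]_n -> 'rV[R]_n) (x : nat -> 'rV[R]_n) :
  proper_fun h -> lsc_fun h -> econvex_fun h -> convex_fun F ->
  (* x* minimizes f = F + h *)
  (forall z, ((F xs)%:E + h xs <= (F z)%:E + h z)%E) ->
  0 <= q < 2 -> 0 < L -> 0 <= delta ->
  (* inexact (delta, L)-oracle of degree q on dom f = dom h *)
  (forall y, edom h y -> forall z, edom h z ->
     0 <= F z - (F y + dotv (g y) (z - y)) <=
       L / 2 * enorm (z - y) ^+ 2 + delta * (enorm (z - y)) `^ q) ->
  0 < rho ->
  edom h (x 0%N) ->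
  (forall k, is_prox (L + q * rho)^-1 h
     (x k - (L + q * rho)^-1 *: g (x k)) (x k.+1)) ->
  forall k : nat, (1 <= k)%N ->
    let xhat := (k.+1%:R)^-1 *: \sum_(i < k.+1) x i.+1 in
    let Rd := enorm (x 0%N - xs) in
    ((F xhat)%:E + h xhat - ((F xs)%:E + h xs) <=
      ((L + q * rho) * Rd ^+ 2 / (2 * k%:R)
       + (2 - q) * delta `^ (2 / (2 - q)) / (2 * rho `^ (q / (2 - q))))%:E)%E.
Proof.
(* closedness of h only matters for the existence of the proximal steps, which are given *)
move=> h_proper _ h_conv F_conv xs_min q_range L_gt0 delta_ge0 oracle rho_gt0 x0_dom
  prox k k_ge1 /=.
have xs_dom : edom h xs := edom_le (xs_min (x 0%N)) x0_dom.
have x_prox i : is_min_on (edom h) (fun y => fine (h y) +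
    (L + q * rho) / 2 * enorm (x i - (L + q * rho)^-1 *: g (x i) - y) ^+ 2) (x i.+1).
  by have := is_prox_min_on h_proper (prox i); rewrite invrK.
have [xhat_dom f_xhat] := prox_grad_average F_conv (convex_on_edom h_proper h_conv)
  q_range L_gt0 delta_ge0 rho_gt0 oracle x0_dom x_prox xs_dom k.
rewrite (edom_fineK h_proper xhat_dom) (edom_fineK h_proper xs_dom) -!EFinD lee_fin.
apply: le_trans f_xhat _; rewrite lerD2r ler_wpM2l ?lef_pV2 ?posrE ?ler_wpM2l //.
- by rewrite mulr_ge0 ?sqr_ge0 // ltW // (inv_step_gt0 q_range L_gt0 rho_gt0).
- by rewrite ler_nat.
- by rewrite mulr_gt0 // ltr0n.
Qed.
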